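(* Let $X$ be a planar Peano continuum and $x_0\in X$. If $x\in X$ is a wedge point for both of the pseudo-Hawaiian earring subgroups $H_1$ and $H_2$ of $\pi_1(X,x_0)$, then $H_1\sim H_2$.
   Context: $\mathbf E$ is the Hawaiian earring (union of circles centered at $(0,1/n)$ of radius $1/n$ in $\mathbb R^2$, basepoint $0$), $\mathbb H=\pi_1(\mathbf E,0)$. For a path $\alpha$, $\hat\alpha([g])=[\overline\alpha*g*\alpha]$. A pseudo-Hawaiian earring subgroup of $\pi_1(X,x_0)$ is a subgroup which is an uncountable homomorphic image of $\mathbb H$. A point $x$ is a wedge point of such $H$ if there exist a surjective homomorphism $\psi:\mathbb H\to H$, a continuous $f:(\mathbf E,0)\to(X,x)$ and a path $\alpha$ from $x$ to $x_0$ with $\psi=\hat\alpha\circ f_*$. $H_1\sim H_2$ means there exist $g\in\pi_1(X,x_0)$ and a pseudo-Hawaiian earring subgroup $H$ of $\pi_1(X,x_0)$ with $H_1\subset H$ and $gH_2g^{-1}\subset H$. *)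

(* The fundamental group is not in the library, so
   homotopy classes of loops are handled through representatives: a subset of
   pi_1(X,x0) is represented by a homotopy-saturated predicate on loops. *)
From HB Require Import structures.
From mathcomp Require Import all_boot all_order all_algebra.
From mathcomp Require Import all_classical all_reals all_analysis.
Set Implicit Arguments. Unset Strict Implicit. Unset Printing Implicit Defensive.
Import Order.TTheory GRing.Theory Num.Theory.
Import numFieldNormedType.Exports.
Local Open Scope classical_set_scope.
Local Open Scope ring_scope.

Section Defs.
Variable R : realType.
Local Notation P := (R * R)%type.

Definition unitI : set R := [set s | 0 <= s <= 1].
Definition unitSq : set (R * R) := unitI `*` unitI.

Definition origin : P := (0, 0).

Definition hawaiian_earring : set P :=
  [set z | exists n : nat, (0 < n)%N /\
     z.1 ^+ 2 + (z.2 - n%:R^-1) ^+ 2 = (n%:R^-1) ^+ 2].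

Definition locally_connected (X : set P) :=
  forall x, X x -> forall U : set P, open U -> U x ->
    exists V : set P, [/\ V `<=` U `&` X, connected V &
      exists W : set P, [/\ open W, W x & W `&` X `<=` V]].

(** a planar Peano continuum: compact, connected, locally connected subset of
    the plane (metrizability is automatic) *)
Definition planar_peano_continuum (X : set P) :=
  [/\ compact X, connected X & locally_connected X].

(** paths in X, parametrized by [0,1] (values outside [0,1] are irrelevant) *)
Definition is_path (X : set P) (p : R -> P) :=
  {within unitI, continuous p} /\ p @` unitI `<=` X.

Definition is_path_from_to (X : set P) (a b : P) (p : R -> P) :=
  [/\ is_path X p, p 0 = a & p 1 = b].

Definition is_loop (X : set P) (a : P) (p : R -> P) := is_path_from_to X a a p.

Definition path_concat (p q : R -> P) : R -> P :=
  fun s => if s <= 2^-1 then p (2 * s) else q (2 * s - 1).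
Definition path_rev (p : R -> P) : R -> P := fun s => p (1 - s).

Definition path_homotopic (X : set P) (p q : R -> P) :=
  [/\ is_path X p, is_path X q, p 0 = q 0, p 1 = q 1 &
   exists h : P -> P,
     [/\ {within unitSq, continuous h}, h @` unitSq `<=` X,
         (forall s, unitI s -> h (s, 0) = p s /\ h (s, 1) = q s) &
         (forall t, unitI t -> h (0, t) = p 0 /\ h (1, t) = p 1)]].

(** A subset S of pi_1(X,x0) (given as a predicate on loops, saturated) is
    countable iff its homotopy classes can be injectively coded by nat. *)
Definition countable_classes (X : set P) (S : set (R -> P)) :=
  exists c : (R -> P) -> nat,
    forall l l', S l -> S l' -> c l = c l' -> path_homotopic X l l'.

(** psi is (a representative-level description of) a homomorphism
    HH = pi_1(E,0) -> pi_1(X,x0) *)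
Definition HE_hom (X : set P) (x0 : P) (psi : (R -> P) -> (R -> P)) :=
  [/\ (forall g, is_loop hawaiian_earring origin g -> is_loop X x0 (psi g)),
      (forall g g', path_homotopic hawaiian_earring g g' ->
         is_loop hawaiian_earring origin g ->
         path_homotopic X (psi g) (psi g')) &
      (forall g g', is_loop hawaiian_earring origin g ->
         is_loop hawaiian_earring origin g' ->
         path_homotopic X (psi (path_concat g g'))
                          (path_concat (psi g) (psi g')))].

Definition is_image_of (X : set P) (x0 : P) (psi : (R -> P) -> (R -> P))
    (H : set (R -> P)) :=
  forall l, H l <-> (is_loop X x0 l /\
     exists g, is_loop hawaiian_earring origin g /\ path_homotopic X (psi g) l).

Definition pseudo_HE_subgroup (X : set P) (x0 : P) (H : set (R -> P)) :=
  (exists psi, HE_hom X x0 psi /\ is_image_of X x0 psi H) /\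
  ~ countable_classes X H.

Definition wedge_map (f : P -> P) (alpha : R -> P) : (R -> P) -> (R -> P) :=
  fun g => path_concat (path_concat (path_rev alpha) (f \o g)) alpha.

Definition wedge_point (X : set P) (x0 : P) (H : set (R -> P)) (x : P) :=
  exists (f : P -> P) (alpha : R -> P),
    [/\ {within hawaiian_earring, continuous f},
        f @` hawaiian_earring `<=` X, f origin = x,
        is_path_from_to X x x0 alpha &
        exists psi, [/\ HE_hom X x0 psi, is_image_of X x0 psi H &
          forall g, is_loop hawaiian_earring origin g ->
            path_homotopic X (psi g) (wedge_map f alpha g)]].

Definition HE_equiv (X : set P) (x0 : P) (H1 H2 : set (R -> P)) :=
  exists (g : R -> P) (H : set (R -> P)),
    [/\ is_loop X x0 g, pseudo_HE_subgroup X x0 H, H1 `<=` H &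
        forall l, H2 l -> H (path_concat (path_concat g l) (path_rev g))].

End Defs.

(* Fold the Hawaiian earring onto two copies of itself: the map sending its
   odd circles to E by f1 and its even circles to E by f2 is continuous at the
   origin because the circles shrink to it, and composed with the embeddings of
   E onto the odd (resp. even) circles it gives back f1 (resp. f2).  So the image
   H of (alpha1-hat) o (fold)_* contains H1 -- hence is uncountable -- and
   conjugation by alpha1^-1 alpha2 carries H2 into H. *)
From mathcomp Require Import all_boot all_order all_algebra.
From mathcomp Require Import all_classical all_reals all_analysis.
From mathcomp Require Import ring lra zify.
Set Implicit Arguments. Unset Strict Implicit. Unset Printing Implicit Defensive.
Import Order.TTheory GRing.Theory Num.Theory.
Import numFieldNormedType.Exports.
Local Open Scope classical_set_scope.
Local Open Scope ring_scope.

Ltac case_ifs := repeat (let H := fresh "H" in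
  case: ifP => H; [idtac| move/negbT: H; rewrite -ltNge => H]).

Lemma cvg_within_to_within {T U : Type} (A : set T) (B : set U)
    (F : set_system T) (G : set_system U) (g : T -> U) {FF : Filter F} :
  F (fun y => A y -> B (g y)) -> g @ within A F --> G ->
  g @ within A F --> within B G.
Proof.
move=> AB gG Q /= WQ; have := gG _ WQ; rewrite /within /= !nbhs_simpl /= => gQ.
by apply: (filterS2 _ _ gQ AB) => y /= h h2 Ay; exact: h Ay (h2 Ay).
Qed.

Lemma continuous_within_comp (T U V : topologicalType) (A : set T) (B : set U)
    (g : T -> U) (f : U -> V) :
  {within A, continuous g} -> {within B, continuous f} ->
  (forall y, A y -> B (g y)) -> {within A, continuous (f \o g)}.
Proof.
rewrite !subspace_continuousP => cg cf AB x Ax.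
have gx : g @ within A (nbhs x) --> within B (nbhs (g x)).
  by apply: cvg_within_to_within; [exact: filterE|exact: cg].
exact: cvg_comp gx (cf _ (AB _ Ax)).
Qed.

Lemma continuous_comp_within (T U V : topologicalType) (A : set T) (B : set U)
    (g : T -> U) (f : U -> V) :
  continuous g -> {within B, continuous f} ->
  (forall y, A y -> B (g y)) -> {within A, continuous (f \o g)}.
Proof. by move=> cg; apply: continuous_within_comp; exact: continuous_subspaceT. Qed.

Lemma eq_continuous_within (T U : topologicalType) (A : set T) (f g : T -> U) :
  (forall x, A x -> f x = g x) ->
  {within A, continuous f} -> {within A, continuous g}.
Proof. by move=> fg; apply: subspace_eq_continuous => x /set_mem; exact: fg. Qed.

Lemma continuous_within_if_le (R : realType) (T U : topologicalType) (D : set T)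
    (c : T -> R) (a : R) (g k : T -> U) :
  closed D -> continuous c ->
  {within D `&` [set z | c z <= a], continuous g} ->
  {within D `&` [set z | a <= c z], continuous k} ->
  (forall z, D z -> c z = a -> g z = k z) ->
  {within D, continuous (fun z => if c z <= a then g z else k z)}.
Proof.
move=> cD cc cg ck gk.
have -> : D = (D `&` [set z | c z <= a]) `|` (D `&` [set z | a <= c z]).
  apply/seteqP; split => [z Dz|z]; last by case=> -[].
  by case: (lerP (c z) a) => h; [left|right; split => //; exact: ltW].
have cl_le : closed [set z | c z <= a].
  by apply: (@preimage_closed _ _ c [set r | r <= a]) => [? _|]; [exact: cc|exact: closed_le].
have cl_ge : closed [set z | a <= c z].
  by apply: (@preimage_closed _ _ c [set r | a <= r]) => [? _|]; [exact: cc|exact: closed_ge].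
apply: withinU_continuous; try exact: closedI.
  by apply: eq_continuous_within cg => z [_ ->].
apply: eq_continuous_within ck => z [Dz /= az]; case: ifP => // za.
by apply/esym/gk => //; apply/eqP; rewrite eq_le za az.
Qed.

Section RealMaps.
Variable R : realType.
Local Notation P := (R * R)%type.

Lemma continuous_fst : continuous (@fst R R). Proof. by move=> z; exact: cvg_fst. Qed.
Lemma continuous_snd : continuous (@snd R R). Proof. by move=> z; exact: cvg_snd. Qed.

Lemma continuous_pair (T : topologicalType) (f g : T -> R) :
  continuous f -> continuous g -> continuous (fun z => (f z, g z)).
Proof.
by move=> cf cg z; apply: (@cvg_pair _ _ _ _ (nbhs (f z)) (nbhs (g z))); [exact: cf|exact: cg].
Qed.

Lemma continuous_affine (a b : R) : continuous (fun s : R => a * s + b).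
Proof. by move=> s; apply: cvgD; [apply: cvgM; [exact: cvg_cst|exact: cvg_id]|exact: cvg_cst]. Qed.

Lemma continuous_affine_fst (a b : R) : continuous (fun z : P => a * z.1 + b).
Proof. by move=> z; apply: cvgD; [apply: cvgM; [exact: cvg_cst|exact: cvg_fst]|exact: cvg_cst]. Qed.

Lemma continuous_affine_snd (a b : R) : continuous (fun z : P => a * z.2 + b).
Proof. by move=> z; apply: cvgD; [apply: cvgM; [exact: cvg_cst|exact: cvg_snd]|exact: cvg_cst]. Qed.

Lemma continuous_minf (f g : R -> R) :
  continuous f -> continuous g -> continuous (f \min g).
Proof. by move=> cf cg s; apply: continuous_min; [exact: cf|exact: cg]. Qed.

Lemma continuous_maxf (f g : R -> R) :
  continuous f -> continuous g -> continuous (f \max g).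
Proof. by move=> cf cg s; apply: continuous_max; [exact: cf|exact: cg]. Qed.

Lemma unitI0 : unitI (0 : R). Proof. by rewrite /unitI /= lexx ler01. Qed.
Lemma unitI1 : unitI (1 : R). Proof. by rewrite /unitI /= lexx ler01. Qed.

Lemma closed_unitI : closed (@unitI R).
Proof.
have -> : @unitI R = [set s | 0 <= s] `&` [set s | s <= 1].
  apply/seteqP; split => s; rewrite /unitI /=; first by move=> /andP[].
  by move=> [-> ->].
by apply: closedI; [exact: closed_ge|exact: closed_le].
Qed.

Lemma closed_unitSq : closed (@unitSq R).
Proof.
have -> : @unitSq R = (fst @^-1` @unitI R) `&` (snd @^-1` @unitI R) by [].
by apply: closedI; apply: preimage_closed; try exact: closed_unitI;
  move=> z _; [exact: cvg_fst|exact: cvg_snd].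
Qed.

End RealMaps.
Arguments unitI0 {R}.
Arguments unitI1 {R}.

(** * Paths and their homotopy groupoid *)

Section Paths.
Variables (R : realType) (X : set (R * R)).
Local Notation P := (R * R)%type.
Local Notation I := (@unitI R).
Local Notation path := (is_path X).
Local Notation pth := (is_path_from_to X).
Local Notation cat := (@path_concat R).
Local Notation rev := (@path_rev R).

Lemma is_path_comp (p : R -> P) (phi : R -> R) :
  path p -> continuous phi -> (forall s, I s -> I (phi s)) -> path (p \o phi).
Proof.
move=> [cp ip] cphi phiI; split; first exact: continuous_comp_within cphi cp phiI.
by move=> _ [s Is <-]; apply: ip; exists (phi s) => //; exact: phiI.
Qed.

Lemma is_path_eq (p q : R -> P) : path p -> (forall s, I s -> p s = q s) -> path q.
Proof.
move=> [cp ip] pq; split; first exact: eq_continuous_within cp.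
by move=> _ [s Is <-]; rewrite -pq //; apply: ip; exists s.
Qed.

Lemma path_concat0 (p q : R -> P) : cat p q 0 = p 0.
Proof. by rewrite /path_concat ifT ?mulr0 // invr_ge0 ler0n. Qed.

Lemma path_concat1 (p q : R -> P) : cat p q 1 = q 1.
Proof.
by rewrite /path_concat ifF; [congr q; lra|apply/negbTE; rewrite -ltNge; lra].
Qed.

Lemma path_rev0 (p : R -> P) : rev p 0 = p 1. Proof. by rewrite /path_rev subr0. Qed.
Lemma path_rev1 (p : R -> P) : rev p 1 = p 0. Proof. by rewrite /path_rev subrr. Qed.

Lemma is_path_concat (p q : R -> P) : path p -> path q -> p 1 = q 0 -> path (cat p q).
Proof.
move=> [cp ip] [cq iq] pq; split.
  apply: (@eq_continuous_within _ _ I (fun s => if id s <= 2^-1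
      then (p \o (fun s => 2 * s + 0)) s else (q \o (fun s => 2 * s + -1)) s)).
    by move=> s _ /=; rewrite /path_concat addr0.
  apply: continuous_within_if_le; [exact: closed_unitI|by move=> ?; exact: cvg_id| | |].
  - apply: (continuous_comp_within _ cp) => [|s [/andP[s0 s1] /= sh]].
      exact: continuous_affine.
    by rewrite /unitI /=; apply/andP; split; lra.
  - apply: (continuous_comp_within _ cq) => [|s [/andP[s0 s1] /= sh]].
      exact: continuous_affine.
    by rewrite /unitI /=; apply/andP; split; lra.
  - by move=> s _ /= ->; rewrite addr0 divff // pq; congr q; lra.
move=> _ [s /andP[s0 s1] <-]; rewrite /path_concat; case_ifs.
  by apply: ip; exists (2 * s) => //; rewrite /unitI /=; apply/andP; split; lra.
by apply: iq; exists (2 * s - 1) => //; rewrite /unitI /=; apply/andP; split; lra.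
Qed.

Lemma path_from_to_concat (a b c : P) p q : pth a b p -> pth b c q -> pth a c (cat p q).
Proof.
move=> [pp p0 p1] [qp q0 q1]; split; rewrite ?path_concat0 ?path_concat1 //.
by apply: is_path_concat => //; rewrite p1 q0.
Qed.

Lemma path_from_to_rev (a b : P) p : pth a b p -> pth b a (rev p).
Proof.
move=> [pp p0 p1]; split; rewrite ?path_rev0 ?path_rev1 //.
apply: (@is_path_eq (p \o (fun s => -1 * s + 1))); last first.
  by move=> s _; rewrite /path_rev /=; congr p; lra.
apply: is_path_comp => //; first exact: continuous_affine.
by move=> s /andP[s0 s1]; rewrite /unitI /=; apply/andP; split; lra.
Qed.

Lemma path_from_to_const (a : P) : X a -> pth a a (fun _ => a).
Proof.
move=> Xa; split => //; split; last by move=> _ [s _ <-].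
by apply: continuous_subspaceT => s; exact: cvg_cst.
Qed.

Lemma path_from_to_path a b p : pth a b p -> path p. Proof. by case. Qed.

Lemma path_from_to_in0 a b p : pth a b p -> X a.
Proof. by move=> [[_ ip] <- _]; apply: ip; exists 0 => //; exact: unitI0. Qed.

Lemma path_from_to_endpoints a b c p q : pth a b p -> pth b c q -> p 1 = q 0.
Proof. by move=> [_ _ ->] [_ -> _]. Qed.

End Paths.

Section Homotopy.
Variables (R : realType) (X : set (R * R)).
Local Notation P := (R * R)%type.
Local Notation I := (@unitI R).
Local Notation path := (is_path X).
Local Notation pth := (is_path_from_to X).
Local Notation hom := (path_homotopic X).
Local Notation cat := (@path_concat R).
Local Notation rev := (@path_rev R).

Lemma homotopic_reparam_family (p : R -> P) (Phi : P -> R) (f g : R -> R) :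
  path p -> continuous Phi -> (forall z, unitSq z -> I (Phi z)) ->
  (forall t, I t -> Phi (0, t) = Phi (0, 0) /\ Phi (1, t) = Phi (1, 0)) ->
  (forall s, I s -> f s = Phi (s, 0) /\ g s = Phi (s, 1)) ->
  hom (p \o f) (p \o g).
Proof.
move=> pp cPhi PhiI Phi_ends fg.
have edge_path (t : R) (h : R -> R) : I t -> (forall s, I s -> h s = Phi (s, t)) ->
    path (p \o h).
  move=> It ht; apply: (@is_path_eq _ _ (p \o (fun s => Phi (s, t)))); last first.
    by move=> s Is /=; rewrite ht.
  apply: is_path_comp pp _ _ => [|s Is]; last by apply: PhiI.
  move=> s; apply: continuous_comp; last exact: cPhi.
  by apply: continuous_pair => ?; [exact: cvg_id|exact: cvg_cst].
have pf := edge_path 0 f unitI0 (fun s Is => (fg s Is).1).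
have pg := edge_path 1 g unitI1 (fun s Is => (fg s Is).2).
have [f0 g0] := fg 0 unitI0; have [f1 g1] := fg 1 unitI1.
split => //=; rewrite ?f0 ?g0 ?f1 ?g1 ?(Phi_ends 1 unitI1).1 ?(Phi_ends 1 unitI1).2 //.
exists (p \o Phi); split.
- by apply: (continuous_comp_within cPhi _ PhiI); case: pp.
- by move=> _ [z Iz <-]; case: pp => _; apply; exists (Phi z) => //; exact: PhiI.
- by move=> s Is /=; rewrite (fg s Is).1 (fg s Is).2.
- by move=> t It /=; rewrite (Phi_ends t It).1 (Phi_ends t It).2.
Qed.

Lemma homotopic_eq (p q : R -> P) : path p -> (forall s, I s -> p s = q s) -> hom p q.
Proof.
move=> pp pq.
have [_ _ _ _ [h [ch ih hb he]]] := @homotopic_reparam_family p fst id id pp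
  (@continuous_fst R) (fun z h => proj1 h) (fun t _ => conj erefl erefl)
  (fun s _ => conj erefl erefl).
split; rewrite -?pq //; try exact: unitI0; try exact: unitI1.
- exact: is_path_eq pp pq.
exists h; split => // s Is; have [-> ->] := hb s Is; by rewrite /= pq.
Qed.

Lemma homotopic_refl p : path p -> hom p p.
Proof. by move=> pp; apply: homotopic_eq. Qed.

Lemma homotopic_sym p q : hom p q -> hom q p.
Proof.
move=> [pp qp e0 e1 [h [ch ih hb he]]]; split => //.
exists (h \o (fun z => (z.1, -1 * z.2 + 1))); split.
- apply: (continuous_comp_within _ ch) => [|z [/= I1z /andP[a b]]].
    by apply: continuous_pair; [exact: continuous_fst|exact: continuous_affine_snd].
  by split => //=; apply/andP; split; lra.
- move=> _ [z [/= I1z /andP[a b]] <-]; apply: ih; exists (z.1, -1 * z.2 + 1) => //.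
  by split => //=; apply/andP; split; lra.
- move=> s Is /=; have [h0 h1] := hb s Is.
  by split; [rewrite mulr0 add0r h1|rewrite mulr1 addNr h0].
- move=> t /andP[a b] /=; have It : I (-1 * t + 1) by apply/andP; split; lra.
  by rewrite -e0 -e1; exact: he.
Qed.

Lemma homotopic_trans p q r : hom p q -> hom q r -> hom p r.
Proof.
move=> [pp qp e0 e1 [h [ch ih hb he]]] [_ rp f0 f1 [k [ck ik kb ke]]].
split; rewrite ?e0 ?e1 //.
exists (fun z => if z.2 <= 2^-1 then (h \o (fun z => (z.1, 2 * z.2 + 0))) z
                 else (k \o (fun z => (z.1, 2 * z.2 + -1))) z); split.
- apply: continuous_within_if_le; [exact: closed_unitSq|exact: continuous_snd| | |].
  + apply: (continuous_comp_within _ ch) => [|z [[/= I1z /andP[a b]] /= c]].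
      by apply: continuous_pair; [exact: continuous_fst|exact: continuous_affine_snd].
    by split => //=; apply/andP; split; lra.
  + apply: (continuous_comp_within _ ck) => [|z [[/= I1z /andP[a b]] /= c]].
      by apply: continuous_pair; [exact: continuous_fst|exact: continuous_affine_snd].
    by split => //=; apply/andP; split; lra.
  + move=> [s t] [/= Is _] /= ->; rewrite addr0 divff // (hb s Is).2.
    by rewrite -(kb s Is).1; congr k; congr pair; lra.
- move=> _ [[s t] [/= Is /andP[a b]] <-] /=; case_ifs.
    by apply: ih; exists (s, 2 * t + 0) => //; split => //=; apply/andP; split; lra.
  by apply: ik; exists (s, 2 * t + -1) => //; split => //=; apply/andP; split; lra.
- move=> s Is /=; rewrite ifT ?invr_ge0 ?ler0n // mulr0 addr0 (hb s Is).1.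
  rewrite ifF; last by apply/negbTE; rewrite -ltNge; lra.
  by split => //; rewrite -(kb s Is).2; congr k; congr pair; lra.
- move=> t /andP[a b] /=; case_ifs.
    have It : I (2 * t + 0) by apply/andP; split; lra.
    by rewrite -e0 -e1; exact: he.
  have It : I (2 * t + -1) by apply/andP; split; lra.
  exact: ke.
Qed.

Lemma homotopic_concat p p' q q' :
  hom p p' -> hom q q' -> p 1 = q 0 -> hom (cat p q) (cat p' q').
Proof.
move=> [pp pp' e0 e1 [h [ch ih hb he]]] [qp qp' f0 f1 [k [ck ik kb ke]]] pq.
split; rewrite ?path_concat0 ?path_concat1 //; try (apply: is_path_concat => //; congruence).
exists (fun z => if z.1 <= 2^-1 then (h \o (fun z => (2 * z.1 + 0, z.2))) z
                 else (k \o (fun z => (2 * z.1 + -1, z.2))) z); split.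
- apply: continuous_within_if_le; [exact: closed_unitSq|exact: continuous_fst| | |].
  + apply: (continuous_comp_within _ ch) => [|z [[/= /andP[a b] I2z] /= c]].
      by apply: continuous_pair; [exact: continuous_affine_fst|exact: continuous_snd].
    by split => //=; apply/andP; split; lra.
  + apply: (continuous_comp_within _ ck) => [|z [[/= /andP[a b] I2z] /= c]].
      by apply: continuous_pair; [exact: continuous_affine_fst|exact: continuous_snd].
    by split => //=; apply/andP; split; lra.
  + move=> [s t] [/= _ It] /= ->; rewrite addr0 divff // (he t It).2.
    by rewrite subrr (ke t It).1 pq.
- move=> _ [[s t] [/= /andP[a b] It] <-] /=; case_ifs.
    by apply: ih; exists (2 * s + 0, t) => //; split => //=; apply/andP; split; lra.
  by apply: ik; exists (2 * s + -1, t) => //; split => //=; apply/andP; split; lra.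
- move=> s /andP[a b] /=; rewrite /path_concat; case_ifs.
    have Is : I (2 * s + 0) by apply/andP; split; lra.
    by have [-> ->] := hb _ Is; rewrite addr0.
  have Is : I (2 * s + -1) by apply/andP; split; lra.
  by have [-> ->] := kb _ Is.
- move=> t It /=; rewrite ifT ?invr_ge0 ?ler0n // mulr0 addr0 (he t It).1.
  rewrite ifF; last by apply/negbTE; rewrite -ltNge; lra.
  have -> : 2 * 1 + -1 = 1 :> R by lra.
  by rewrite (ke t It).2.
Qed.

Lemma homotopic_concatl a b c p q q' : pth a b p -> pth b c q -> hom q q' ->
  hom (cat p q) (cat p q').
Proof.
move=> hp hq qq'; apply: homotopic_concat qq' (path_from_to_endpoints hp hq).
exact: homotopic_refl (path_from_to_path hp).
Qed.

Lemma homotopic_concatr a b c p p' q : pth a b p -> pth b c q -> hom p p' ->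
  hom (cat p q) (cat p' q).
Proof.
move=> hp hq pp'; apply: homotopic_concat pp' _ (path_from_to_endpoints hp hq).
exact: homotopic_refl (path_from_to_path hq).
Qed.

Lemma homotopic_map (Y : set P) (F : P -> P) p q :
  {within Y, continuous F} -> (forall y, Y y -> X (F y)) ->
  path_homotopic Y p q -> hom (F \o p) (F \o q).
Proof.
move=> cF FY [[cp ip] [cq iq] e0 e1 [h [ch ih hb he]]].
have path_map (r : R -> P) : {within I, continuous r} -> r @` I `<=` Y -> path (F \o r).
  move=> cr ir; split; first by apply: (continuous_within_comp cr cF) => s Is; apply: ir; exists s.
  by move=> _ [s Is <-]; apply: FY; apply: ir; exists s.
split => //=; try exact: path_map; rewrite ?e0 ?e1 //.
exists (F \o h); split.
- by apply: (continuous_within_comp ch cF) => z Iz; apply: ih; exists z.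
- by move=> _ [z Iz <-]; apply: FY; apply: ih; exists z.
- by move=> s Is /=; have [-> ->] := hb s Is.
- by move=> t It /=; have [-> ->] := he t It; rewrite e0 e1.
Qed.

Lemma homotopic_reparam (p : R -> P) (phi : R -> R) : path p -> continuous phi ->
  (forall s, I s -> I (phi s)) -> phi 0 = 0 -> phi 1 = 1 -> hom (p \o phi) p.
Proof.
move=> pp cphi phiI e0 e1.
apply: (@homotopic_reparam_family p (fun z => (1 - z.2) * phi z.1 + z.2 * z.1) phi id pp).
- move=> z; apply: cvgD; apply: cvgM.
  + by apply: cvgB; [exact: cvg_cst|exact: cvg_snd].
  + by apply: continuous_comp; [exact: cvg_fst|exact: cphi].
  + exact: cvg_snd.
  + exact: cvg_fst.
- move=> [s t] [/= Is /andP[a b]]; have /andP[c d] := phiI s Is.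
  by move: Is => /andP[a' b']; apply/andP; split; nra.
- by move=> t _ /=; rewrite e0 e1; split; ring.
- by move=> s _ /=; split; ring.
Qed.

Lemma homotopic_reparam_const (p : R -> P) (phi : R -> R) : path p -> continuous phi ->
  (forall s, I s -> I (phi s)) -> phi 0 = 0 -> phi 1 = 0 -> hom (p \o phi) (fun _ => p 0).
Proof.
move=> pp cphi phiI e0 e1.
apply: (@homotopic_reparam_family p (fun z => (1 - z.2) * phi z.1) phi (fun _ => 0) pp).
- move=> z; apply: cvgM.
  + by apply: cvgB; [exact: cvg_cst|exact: cvg_snd].
  + by apply: continuous_comp; [exact: cvg_fst|exact: cphi].
- move=> [s t] [/= Is /andP[a b]]; have /andP[c d] := phiI s Is.
  by apply/andP; split; nra.
- by move=> t _ /=; rewrite e0 e1; split; ring.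
- by move=> s _ /=; split; ring.
Qed.

Lemma homotopic_concatA a b c d p q r : pth a b p -> pth b c q -> pth c d r ->
  hom (cat (cat p q) r) (cat p (cat q r)).
Proof.
move=> hp hq hr.
pose phi := (fun s : R => 2 * s + 0) \min
  ((fun s : R => 1 * s + 4^-1) \min (fun s : R => 2^-1 * s + 2^-1)).
have cphi : continuous phi.
  by apply: continuous_minf; [|apply: continuous_minf]; exact: continuous_affine.
have phiE s : phi s = if s <= 4^-1 then 2 * s
                      else if s <= 2^-1 then s + 4^-1 else 2^-1 * s + 2^-1.
  rewrite /phi /=; case: (lerP s 4^-1) => s1.
    by rewrite (@min_l _ _ (2 * s + 0)) ?addr0 // le_min; apply/andP; split; lra.
  case: (lerP s 2^-1) => s2.
    by rewrite (@min_l _ _ (1 * s + 4^-1)) ?min_r ?mul1r //; lra.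
  by rewrite (@min_r _ _ (1 * s + 4^-1)) ?min_r //; lra.
apply: (@homotopic_trans _ (cat p (cat q r) \o phi)).
  apply: homotopic_eq; first exact: path_from_to_path (path_from_to_concat (path_from_to_concat hp hq) hr).
  move=> s /andP[s0 s1]; rewrite /= phiE.
  case: (lerP s 4^-1) => s14; [|case: (lerP s 2^-1) => s12]; rewrite /path_concat;
    by case_ifs; try (exfalso; lra); match goal with |- ?f _ = ?f _ => congr f; lra end.
apply: (@homotopic_reparam _ phi) => //.
- exact: path_from_to_path (path_from_to_concat hp (path_from_to_concat hq hr)).
- by move=> s /andP[s0 s1]; rewrite phiE; case_ifs; apply/andP; split; lra.
- by rewrite phiE; case_ifs => //; lra.
- by rewrite phiE; case_ifs => //; lra.
Qed.

Lemma homotopic_const_concat a b p : pth a b p -> hom (cat (fun _ => a) p) p.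
Proof.
move=> hp.
pose phi := (fun s : R => 2 * s + -1) \max (fun s : R => 0 * s + 0).
have cphi : continuous phi by apply: continuous_maxf; exact: continuous_affine.
have phiE s : phi s = if s <= 2^-1 then 0 else 2 * s - 1.
  by rewrite /phi /=; case_ifs; [rewrite max_r mul0r ?addr0|rewrite max_l]; lra.
apply: (@homotopic_trans _ (p \o phi)).
  apply: homotopic_eq.
    exact: path_from_to_path (path_from_to_concat (path_from_to_const (path_from_to_in0 hp)) hp).
  move=> s /andP[s0 s1]; rewrite /= phiE /path_concat; case: ifP => // _.
  by have [_ -> _] := hp.
apply: (@homotopic_reparam _ phi) => //; first exact: path_from_to_path hp.
- by move=> s /andP[s0 s1]; rewrite phiE; case_ifs; apply/andP; split; lra.
- by rewrite phiE; case_ifs => //; lra.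
- by rewrite phiE; case_ifs => //; lra.
Qed.

Lemma homotopic_concat_rev a b p : pth a b p -> hom (cat p (rev p)) (fun _ => a).
Proof.
move=> hp.
pose phi := (fun s : R => 2 * s + 0) \min (fun s : R => -2 * s + 2).
have cphi : continuous phi by apply: continuous_minf; exact: continuous_affine.
have phiE s : phi s = if s <= 2^-1 then 2 * s else -2 * s + 2.
  by rewrite /phi /=; case_ifs; [rewrite min_l ?addr0|rewrite min_r]; lra.
apply: (@homotopic_trans _ (p \o phi)).
  apply: homotopic_eq; first exact: path_from_to_path (path_from_to_concat hp (path_from_to_rev hp)).
  move=> s /andP[s0 s1]; rewrite /= phiE /path_concat /path_rev.
  by case_ifs; try (exfalso; lra); congr p; lra.
have [pp <- _] := hp; apply: (@homotopic_reparam_const _ phi) => //.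
- by move=> s /andP[s0 s1]; rewrite phiE; case_ifs; apply/andP; split; lra.
- by rewrite phiE; case_ifs => //; lra.
- by rewrite phiE; case_ifs => //; lra.
Qed.

Lemma homotopic_rev_concat a b c p q : pth a b p -> pth b c q ->
  hom (rev (cat p q)) (cat (rev q) (rev p)).
Proof.
move=> hp hq; apply: homotopic_eq.
  exact: path_from_to_path (path_from_to_rev (path_from_to_concat hp hq)).
move=> s /andP[s0 s1]; rewrite /path_rev /path_concat; case_ifs; try (exfalso; lra).
- have -> : 2 * (1 - s) = 1 by lra.
  have -> : 1 - 2 * s = 0 by lra.
  by rewrite (path_from_to_endpoints hp hq).
- by congr p; lra.
- by congr q; lra.
Qed.

Lemma homotopic_revK a b p : pth a b p -> hom (rev (rev p)) p.
Proof.
move=> hp; apply: homotopic_eq; first exact: path_from_to_path (path_from_to_rev (path_from_to_rev hp)).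
by move=> s _; rewrite /path_rev; congr p; ring.
Qed.

Lemma homotopic_concat_revK a b c al w : pth a b al -> pth a c w ->
  hom (cat al (cat (rev al) w)) w.
Proof.
move=> ha hw; have hr := path_from_to_rev ha.
apply: homotopic_trans (homotopic_sym (homotopic_concatA ha hr hw)) _.
apply: homotopic_trans (homotopic_const_concat hw).
exact: homotopic_concatr (path_from_to_concat ha hr) hw (homotopic_concat_rev ha).
Qed.

Lemma homotopic_cancel_mid a b c d p q w : pth a b p -> pth b c q -> pth b d w ->
  hom (cat (cat p q) (cat (rev q) w)) (cat p w).
Proof.
move=> hp hq hw; have hqw := path_from_to_concat (path_from_to_rev hq) hw.
apply: homotopic_trans (homotopic_concatA hp hq hqw) _.
exact: homotopic_concatl hp (path_from_to_concat hq hqw) (homotopic_concat_revK hq hw).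
Qed.

End Homotopy.

(** * Folding the Hawaiian earring *)

Section Earring.
Variable R : realType.
Local Notation P := (R * R)%type.
Local Notation E := (@hawaiian_earring R).
Local Notation O := (origin R).

Definition scale (c : R) (z : P) : P := (c * z.1, c * z.2).
Definition sqnorm (z : P) : R := z.1 ^+ 2 + z.2 ^+ 2.
Definition on_circle (n : nat) (z : P) :=
  z.1 ^+ 2 + (z.2 - n%:R^-1) ^+ 2 = (n%:R^-1) ^+ 2.

(* Recovers [n] from a point of the [n]-th circle other than the origin. *)
Definition circle_index (z : P) : R := 2 * z.2 / sqnorm z.

Lemma on_circleE n z : (0 < n)%N -> on_circle n z <-> sqnorm z = 2 * z.2 / n%:R.
Proof.
move=> n0; have nz : n%:R != 0 :> R by rewrite pnatr_eq0 -lt0n.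
have -> : on_circle n z <-> z.1 ^+ 2 + (z.2 - n%:R^-1) ^+ 2 - (n%:R^-1) ^+ 2 = 0.
  by rewrite /on_circle; split => [->|/eqP]; [rewrite subrr|rewrite subr_eq0 => /eqP].
have -> : z.1 ^+ 2 + (z.2 - n%:R^-1) ^+ 2 - (n%:R^-1) ^+ 2 = sqnorm z - 2 * z.2 / n%:R.
  by rewrite /sqnorm; ring.
by split => [/eqP|->]; [rewrite subr_eq0 => /eqP|rewrite subrr].
Qed.

Lemma sqnorm_eq0 z : sqnorm z = 0 -> z = O.
Proof.
rewrite /sqnorm => h.
have h1 : z.1 ^+ 2 = 0 by apply/eqP; rewrite eq_le sqr_ge0 andbT -h lerDl sqr_ge0.
have h2 : z.2 ^+ 2 = 0 by apply/eqP; rewrite eq_le sqr_ge0 andbT -h lerDr sqr_ge0.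
move: h1 h2 => /eqP; rewrite sqrf_eq0 => /eqP e1 /eqP; rewrite sqrf_eq0 => /eqP e2.
by case: z e1 e2 {h} => a b /= -> ->.
Qed.

Lemma circle_index_on_circle n z : (0 < n)%N -> on_circle n z -> z <> O ->
  circle_index z = n%:R.
Proof.
move=> n0 /(on_circleE z n0) zn zO; have nz : n%:R != 0 :> R by rewrite pnatr_eq0 -lt0n.
have z0 : sqnorm z != 0 by apply/eqP => /sqnorm_eq0.
have z2 : z.2 != 0 by apply: contraNneq z0 => e; rewrite zn e mulr0 mul0r.
by rewrite /circle_index zn; field; apply/andP; split.
Qed.

Lemma truncn_circle_index n z : (0 < n)%N -> on_circle n z -> z <> O ->
  Num.truncn (circle_index z) = n.
Proof. by move=> n0 c zO; rewrite (circle_index_on_circle n0 c zO) natrK. Qed.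

Lemma scaleA a b z : scale a (scale b z) = scale (a * b) z.
Proof. by rewrite /scale /= !mulrA. Qed.

Lemma scale1 z : scale 1 z = z.
Proof. by case: z => a b; rewrite /scale /= !mul1r. Qed.

Lemma scale_origin c : scale c O = O.
Proof. by rewrite /scale /= mulr0. Qed.

Lemma scale_neq_origin c z : c != 0 -> z <> O -> scale c z <> O.
Proof.
move=> c0 zO e; apply: zO; case: z e => a b; rewrite /scale /origin /= => -[] /eqP + /eqP.
by rewrite !mulf_eq0 (negbTE c0) /= => /eqP -> /eqP ->.
Qed.

Lemma on_circle_scale n k z : (0 < n)%N -> (0 < k)%N -> on_circle n z ->
  on_circle k (scale (n%:R / k%:R) z).
Proof.
move=> n0 k0 /(on_circleE z n0) zn; apply/(on_circleE _ k0).
have nz : n%:R != 0 :> R by rewrite pnatr_eq0 -lt0n.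
have kz : k%:R != 0 :> R by rewrite pnatr_eq0 -lt0n.
have -> : sqnorm (scale (n%:R / k%:R) z) = (n%:R / k%:R) ^+ 2 * sqnorm z.
  by rewrite /sqnorm /scale /=; ring.
by rewrite zn /scale /=; field; apply/andP; split.
Qed.

Lemma earring_origin : E O.
Proof. by exists 1%N; split => //; rewrite /on_circle /=; ring. Qed.

Lemma on_circle_earring n z : (0 < n)%N -> on_circle n z -> E z.
Proof. by move=> n0 c; exists n. Qed.

Lemma earringP z : E z -> z <> O -> exists2 n, (0 < n)%N & on_circle n z.
Proof. by move=> [n [n0 c]]; exists n. Qed.


(* [earring_fold x f1 f2] rescales the [(2k-1)]-th circle onto the [k]-th one
   and applies [f1], and the [2k]-th circle onto the [k]-th one and applies
   [f2]; [odd_embed] and [even_embed] rescale the [k]-th circle onto the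
   [(2k-1)]-th and the [2k]-th one. *)
Definition fold_index (n : nat) : nat := if odd n then n.+1./2 else n./2.
Definition fold_scale (n : nat) : R := n%:R / (fold_index n)%:R.
Definition odd_embed_scale (k : nat) : R := k%:R / (k.*2.-1)%:R.

Definition fold_on (f1 f2 : P -> P) (n : nat) (w : P) : P :=
  if odd n then f1 (scale (fold_scale n) w) else f2 (scale (fold_scale n) w).
Definition earring_fold (x : P) (f1 f2 : P -> P) (z : P) : P :=
  if z == O then x else fold_on f1 f2 (Num.truncn (circle_index z)) z.
Definition odd_embed (z : P) : P :=
  if z == O then O else scale (odd_embed_scale (Num.truncn (circle_index z))) z.
Definition even_embed (z : P) : P := scale 2^-1 z.

Lemma fold_index_gt0 n : (0 < n)%N -> (0 < fold_index n)%N.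
Proof.
move=> n0; rewrite /fold_index; have h := odd_double_half n; have h2 := uphalf_half n.
by rewrite uphalfE in h2; case: ifP => o; rewrite o in h h2; lia.
Qed.

Lemma fold_scale_gt0 n : (0 < n)%N -> 0 < fold_scale n.
Proof. by move=> n0; rewrite /fold_scale divr_gt0 // ltr0n // fold_index_gt0. Qed.

Lemma fold_scale_le2 n : (0 < n)%N -> fold_scale n <= 2.
Proof.
move=> n0; rewrite /fold_scale ler_pdivrMr ?ltr0n ?fold_index_gt0 //.
suff : (n <= 2 * fold_index n)%N by rewrite -(ler_nat R) natrM mulrC.
rewrite /fold_index; have h := odd_double_half n; have h2 := uphalf_half n.
by rewrite uphalfE in h2; case: ifP => o; rewrite o in h h2; lia.
Qed.

Lemma earring_fold_origin x f1 f2 : earring_fold x f1 f2 O = x.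
Proof. by rewrite /earring_fold eqxx. Qed.

Lemma earring_fold_on_circle x f1 f2 n z : (0 < n)%N -> on_circle n z -> z <> O ->
  earring_fold x f1 f2 z = fold_on f1 f2 n z.
Proof.
by move=> n0 c zO; rewrite /earring_fold ifF ?(truncn_circle_index n0 c zO) //; apply/eqP.
Qed.

Lemma scale_fold_in n z : (0 < n)%N -> on_circle n z -> E (scale (fold_scale n) z).
Proof.
by move=> n0 c; apply: (on_circle_earring (fold_index_gt0 n0));
  exact: on_circle_scale n0 (fold_index_gt0 n0) c.
Qed.

Lemma earring_fold_in (X : set P) x f1 f2 z :
  f1 @` E `<=` X -> f2 @` E `<=` X -> X x -> E z -> X (earring_fold x f1 f2 z).
Proof.
move=> f1X f2X Xx Ez; have [->|/eqP zO] := eqVneq z O; first by rewrite earring_fold_origin.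
have [n n0 c] := earringP Ez zO.
rewrite (earring_fold_on_circle _ _ _ n0 c zO) /fold_on.
have Ew := scale_fold_in n0 c.
by case: ifP => _; [apply: f1X|apply: f2X]; exists (scale (fold_scale n) z).
Qed.

Lemma odd_index_gt0 k : (0 < k)%N -> (0 < k.*2.-1)%N.
Proof. by move=> k0; lia. Qed.

Lemma odd_embed_scale_gt0 k : (0 < k)%N -> 0 < odd_embed_scale k.
Proof. by move=> k0; rewrite /odd_embed_scale divr_gt0 // ltr0n // odd_index_gt0. Qed.

Lemma odd_embed_scale_le2 k : (0 < k)%N -> odd_embed_scale k <= 2.
Proof.
move=> k0; rewrite /odd_embed_scale ler_pdivrMr ?ltr0n ?odd_index_gt0 //.
have : (k <= 2 * k.*2.-1)%N by lia.
by rewrite -(ler_nat R) natrM mulrC.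
Qed.

Lemma odd_embed_on_circle k z : (0 < k)%N -> on_circle k z -> z <> O ->
  odd_embed z = scale (odd_embed_scale k) z.
Proof. by move=> k0 c zO; rewrite /odd_embed ifF ?(truncn_circle_index k0 c zO) //; apply/eqP. Qed.

Lemma odd_embed_origin : odd_embed O = O.
Proof. by rewrite /odd_embed eqxx. Qed.

Lemma odd_embed_in z : E z -> E (odd_embed z).
Proof.
move=> Ez; have [->|/eqP zO] := eqVneq z O; first by rewrite odd_embed_origin; exact: earring_origin.
have [k k0 c] := earringP Ez zO.
rewrite (odd_embed_on_circle k0 c zO); apply: (on_circle_earring (odd_index_gt0 k0)).
exact: on_circle_scale (odd_index_gt0 k0) c.
Qed.

Lemma earring_fold_odd_embed x f1 f2 z : f1 O = x -> E z ->
  earring_fold x f1 f2 (odd_embed z) = f1 z.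
Proof.
move=> f1x Ez; have [->|/eqP zO] := eqVneq z O.
  by rewrite odd_embed_origin earring_fold_origin.
have [k k0 c] := earringP Ez zO; have m0 := odd_index_gt0 k0.
have kz : k%:R != 0 :> R by rewrite pnatr_eq0 -lt0n.
have mz : (k.*2.-1)%:R != 0 :> R by rewrite pnatr_eq0 -lt0n.
have wO : scale (odd_embed_scale k) z <> O.
  by apply: scale_neq_origin => //; rewrite mulf_neq0 // invr_eq0.
rewrite (odd_embed_on_circle k0 c zO) (earring_fold_on_circle _ _ _ m0 _ wO); last first.
  exact: on_circle_scale.
have mS : (k.*2.-1).+1 = k.*2 by lia.
have om : odd (k.*2.-1) by move: (odd_double k); rewrite -mS /= => /negbFE.
rewrite /fold_on om scaleA.
have -> : fold_scale k.*2.-1 * odd_embed_scale k = 1.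
  rewrite /fold_scale /odd_embed_scale /fold_index om mS doubleK.
  by field; apply/andP; split.
by rewrite scale1.
Qed.

Lemma even_embed_origin : even_embed O = O.
Proof. exact: scale_origin. Qed.

Lemma even_embedE k z : (0 < k)%N -> even_embed z = scale (k%:R / (k.*2)%:R) z.
Proof.
move=> k0; have kz : k%:R != 0 :> R by rewrite pnatr_eq0 -lt0n.
by rewrite /even_embed -muln2 natrM; congr scale; field.
Qed.

Lemma even_embed_in z : E z -> E (even_embed z).
Proof.
move=> Ez; have [->|/eqP zO] := eqVneq z O.
  by rewrite even_embed_origin; exact: earring_origin.
have [k k0 c] := earringP Ez zO; have k20 : (0 < k.*2)%N by lia.
rewrite (even_embedE _ k0); apply: (on_circle_earring k20); exact: on_circle_scale.
Qed.

Lemma earring_fold_even_embed x f1 f2 z : f2 O = x -> E z ->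
  earring_fold x f1 f2 (even_embed z) = f2 z.
Proof.
move=> f2x Ez; have [->|/eqP zO] := eqVneq z O.
  by rewrite even_embed_origin earring_fold_origin.
have [k k0 c] := earringP Ez zO; have k20 : (0 < k.*2)%N by lia.
have kz : k%:R != 0 :> R by rewrite pnatr_eq0 -lt0n.
have wO : scale (k%:R / (k.*2)%:R) z <> O.
  by apply: scale_neq_origin => //; rewrite mulf_neq0 // invr_eq0 pnatr_eq0 -lt0n.
rewrite (even_embedE _ k0) (earring_fold_on_circle _ _ _ k20 _ wO); last first.
  exact: on_circle_scale.
rewrite /fold_on odd_double scaleA.
have -> : fold_scale k.*2 * (k%:R / (k.*2)%:R) = 1.
  by rewrite /fold_scale /fold_index odd_double doubleK -muln2 natrM; field.
by rewrite scale1.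
Qed.

End Earring.
Arguments fold_scale {R} n.
Arguments odd_embed_scale {R} k.

Section EarringContinuity.
Variable R : realType.
Local Notation P := (R * R)%type.
Local Notation E := (@hawaiian_earring R).
Local Notation O := (origin R).

Lemma continuous_sqnorm : continuous (@sqnorm R).
Proof.
have -> : @sqnorm R = fun z => z.1 * z.1 + z.2 * z.2.
  by apply: funext => z; rewrite /sqnorm !expr2.
by move=> z; apply: cvgD; apply: cvgM; (exact: cvg_fst || exact: cvg_snd).
Qed.

Lemma cvg_circle_index (z : P) : z <> O -> @circle_index R @ z --> circle_index z.
Proof.
move=> zO; have z0 : sqnorm z != 0 by apply/eqP => /sqnorm_eq0.
rewrite /circle_index; apply: cvgM; first by apply: cvgM; [exact: cvg_cst|exact: cvg_snd].
by apply: cvgV => //; exact: continuous_sqnorm.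
Qed.

Lemma continuous_scale (c : R) : continuous (scale c).
Proof.
move=> z; apply: (@cvg_pair _ _ _ _ (nbhs (c * z.1)) (nbhs (c * z.2))).
  by apply: cvgM; [exact: cvg_cst|exact: cvg_fst].
by apply: cvgM; [exact: cvg_cst|exact: cvg_snd].
Qed.

Lemma natr_dist_lt_half (n m : nat) : `|n%:R - m%:R : R| < 2^-1 -> m = n.
Proof.
wlog mn : n m / (m < n)%N.
  move=> wlog_mn nm; case: (ltngtP m n) => [mn|nm'|//]; first exact: wlog_mn.
  by apply/esym/wlog_mn => //; rewrite distrC.
have : (m + 1)%:R <= n%:R :> R by rewrite ler_nat addn1.
rewrite natrD => h1 h2; have h3 := ler_norm (n%:R - m%:R : R).
by move: h1 h2 h3; move: (n%:R : R) (m%:R : R) => a b *; exfalso; lra.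
Qed.

(* The circles meet only at the origin, so near a point of the [n]-th circle
   other than the origin the earring is the [n]-th circle. *)
Lemma near_on_circle n (z : P) : (0 < n)%N -> on_circle n z -> z <> O ->
  \forall w \near z, E w -> w <> O /\ on_circle n w.
Proof.
move=> n0 c zO.
have := cvg_circle_index zO => /cvgrPdist_lt /(_ 2^-1); rewrite invr_gt0 ltr0n => /(_ isT).
apply: filterS => w hw Ew; rewrite (circle_index_on_circle n0 c zO) in hw.
have [wO|/eqP wO] := eqVneq w O.
  exfalso; move: hw; rewrite wO /circle_index /sqnorm /= expr2 !mulr0 addr0 mul0r subr0.
  have : 1 <= n%:R :> R by rewrite ler1n.
  by rewrite ger0_norm ?ler0n //; lra.
have [m m0 cm] := earringP Ew wO; rewrite (circle_index_on_circle m0 cm wO) in hw.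
by have mn := natr_dist_lt_half hw; subst m.
Qed.

Lemma ball_scale (e e' c : R) (w : P) : 0 < c <= 2 -> e' <= e ->
  ball O (e' / 2) w -> ball O e (scale c w).
Proof.
move=> /andP[c0 c2] ee [b1 b2]; move: b1 b2; rewrite /ball /= !sub0r !normrN => b1 b2.
split; rewrite /ball /= sub0r normrN normrM (ger0_norm (ltW c0)).
  by have := normr_ge0 w.1; nra.
by have := normr_ge0 w.2; nra.
Qed.

Lemma cvg_origin_rescaled (G f1 f2 : P -> P) (y : P) :
  f1 @ within E (nbhs O) --> y -> f2 @ within E (nbhs O) --> y -> G O = y ->
  (forall w, E w -> w <> O -> exists c, [/\ 0 < c <= 2, E (scale c w) &
     G w = f1 (scale c w) \/ G w = f2 (scale c w)]) ->
  G @ within E (nbhs O) --> y.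
Proof.
move=> f1y f2y GO Gw V Vy.
have /nbhs_ballP[e1 e1p B1] := f1y V Vy.
have /nbhs_ballP[e2 e2p B2] := f2y V Vy.
rewrite /= nbhs_simpl /within /=.
apply/nbhs_ballP; exists (Num.min e1 e2 / 2).
  by rewrite /= divr_gt0 // lt_min; apply/andP; split; [exact: e1p|exact: e2p].
move=> w Bw Ew.
have [->|/eqP wO] := eqVneq w O; first by rewrite /preimage /= GO; exact: nbhs_singleton Vy.
have [c [c02 Ec [e|e]]] := Gw w Ew wO; rewrite /preimage /= e.
  by apply: (B1 (scale c w)) => //; apply: ball_scale c02 _ Bw; rewrite ge_min lexx.
by apply: (B2 (scale c w)) => //; apply: ball_scale c02 _ Bw; rewrite ge_min lexx orbT.
Qed.

Lemma cvg_within_scale n c (z : P) : (0 < n)%N -> on_circle n z -> z <> O ->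
  (forall w, on_circle n w -> E (scale c w)) ->
  scale c @ within E (nbhs z) --> within E (nbhs (scale c z)).
Proof.
move=> n0 c_z zO cE; apply: cvg_within_to_within.
  by apply: filterS (near_on_circle n0 c_z zO) => w h Ew; apply: cE; have [] := h Ew.
have := @continuous_subspaceT _ _ E _ (@continuous_scale c).
by move/subspace_continuousP; apply; exact: on_circle_earring c_z.
Qed.

Lemma cvg_within_on_circle n (z : P) (G K : P -> P) : (0 < n)%N -> on_circle n z ->
  z <> O -> (forall w, on_circle n w -> w <> O -> G w = K w) ->
  K @ within E (nbhs z) --> K z -> G @ within E (nbhs z) --> G z.
Proof.
move=> n0 c_z zO GK Kz; rewrite (GK _ c_z zO).
apply: cvg_trans Kz; apply: near_eq_cvg.
rewrite /within /= /prop_near1 /=.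
by apply: filterS (near_on_circle n0 c_z zO) => w h Ew; have [wO cw] := h Ew; rewrite GK.
Qed.

Lemma continuous_earring_fold (x : P) (f1 f2 : P -> P) :
  {within E, continuous f1} -> {within E, continuous f2} -> f1 O = x -> f2 O = x ->
  {within E, continuous (earring_fold x f1 f2)}.
Proof.
move=> /subspace_continuousP c1 /subspace_continuousP c2 f1x f2x.
apply/subspace_continuousP => z Ez; rewrite /from_subspace /=.
have [->|/eqP zO] := eqVneq z O.
  rewrite earring_fold_origin; apply: (@cvg_origin_rescaled _ f1 f2).
  - by rewrite -f1x; exact: c1 O (@earring_origin R).
  - by rewrite -f2x; exact: c2 O (@earring_origin R).
  - exact: earring_fold_origin.
  move=> w Ew wO; have [n n0 c] := earringP Ew wO; exists (fold_scale n); split.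
  - by rewrite fold_scale_gt0 // fold_scale_le2.
  - exact: scale_fold_in.
  - by rewrite (earring_fold_on_circle _ _ _ n0 c wO) /fold_on; case: ifP; [left|right].
have [n n0 c] := earringP Ez zO.
apply: (@cvg_within_on_circle n z _ (fold_on f1 f2 n)) => //.
  by move=> w cw wO; exact: earring_fold_on_circle.
have fold_cvg (f : P -> P) : (forall y, E y -> f @ within E (nbhs y) --> f y) ->
    (f \o scale (fold_scale n)) @ within E (nbhs z) --> f (scale (fold_scale n) z).
  move=> cf; apply: cvg_comp (cf _ (scale_fold_in n0 c)).
  by apply: (cvg_within_scale n0 c zO) => w cw; exact: scale_fold_in.
by rewrite /fold_on; case: ifP => _; apply: fold_cvg.
Qed.

Lemma continuous_odd_embed : {within E, continuous (@odd_embed R)}.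
Proof.
apply/subspace_continuousP => z Ez; rewrite /from_subspace /=.
have [->|/eqP zO] := eqVneq z O.
  rewrite odd_embed_origin; apply: (@cvg_origin_rescaled _ id id) => //.
  - exact: cvg_within.
  - exact: cvg_within.
  - exact: odd_embed_origin.
  move=> w Ew wO; have [k k0 c] := earringP Ew wO; exists (odd_embed_scale k); split.
  - by rewrite odd_embed_scale_gt0 // odd_embed_scale_le2.
  - by rewrite -(odd_embed_on_circle k0 c wO); exact: odd_embed_in.
  - by left; exact: odd_embed_on_circle.
have [n n0 c] := earringP Ez zO.
apply: (@cvg_within_on_circle n z _ (scale (odd_embed_scale n))) => //.
  by move=> w cw wO; exact: odd_embed_on_circle.
by apply: cvg_trans (@continuous_scale _ z); apply: cvg_fmap2; exact: cvg_within.
Qed.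

Lemma continuous_even_embed : {within E, continuous (@even_embed R)}.
Proof. exact/continuous_subspaceT/continuous_scale. Qed.

End EarringContinuity.

(** * Change of base path and wedge maps *)

Section Conjugation.
Variables (R : realType) (X : set (R * R)).
Local Notation P := (R * R)%type.
Local Notation pth := (is_path_from_to X).
Local Notation hom := (path_homotopic X).
Local Notation cat := (@path_concat R).
Local Notation rev := (@path_rev R).

Lemma homotopic_conj x x0 al m m' : pth x x0 al -> pth x x m -> hom m m' ->
  hom (cat (cat (rev al) m) al) (cat (cat (rev al) m') al).
Proof.
move=> hal hm mm'; have hA := path_from_to_rev hal.
exact: homotopic_concatr (path_from_to_concat hA hm) hal (homotopic_concatl hA hm mm').
Qed.

Lemma homotopic_conj_concat x x0 al m m' : pth x x0 al -> pth x x m -> pth x x m' ->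
  hom (cat (cat (rev al) (cat m m')) al)
      (cat (cat (cat (rev al) m) al) (cat (cat (rev al) m') al)).
Proof.
move=> hal hm hm'; apply: homotopic_sym.
have hA := path_from_to_rev hal; have hAm := path_from_to_concat hA hm.
have hm'al := path_from_to_concat hm' hal.
apply: (@homotopic_trans _ _ _ (cat (cat (cat (rev al) m) al) (cat (rev al) (cat m' al)))).
  apply: homotopic_concatl (path_from_to_concat hAm hal) (path_from_to_concat (path_from_to_concat hA hm') hal) _.
  exact: homotopic_concatA hA hm' hal.
apply: homotopic_trans (homotopic_cancel_mid hAm hal hm'al) _.
apply: homotopic_trans (homotopic_concatA hA hm hm'al) _.
apply: (@homotopic_trans _ _ _ (cat (rev al) (cat (cat m m') al))).
  apply: homotopic_concatl hA (path_from_to_concat hm hm'al) _.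
  exact: homotopic_sym (homotopic_concatA hm hm' hal).
exact: homotopic_sym (homotopic_concatA hA (path_from_to_concat hm hm') hal).
Qed.

Lemma homotopic_conj_change_path x x0 a1 a2 m l :
  pth x x0 a1 -> pth x x0 a2 -> pth x x m -> hom l (cat (cat (rev a2) m) a2) ->
  hom (cat (cat (cat (rev a1) a2) l) (rev (cat (rev a1) a2)))
      (cat (cat (rev a1) m) a1).
Proof.
move=> ha1 ha2 hm lL.
have hA1 := path_from_to_rev ha1; have hA2 := path_from_to_rev ha2.
have hg := path_from_to_concat hA1 ha2; have hma2 := path_from_to_concat hm ha2.
have hA2a1 := path_from_to_concat hA2 ha1.
have hL := path_from_to_concat (path_from_to_concat hA2 hm) ha2.
have hl : pth x0 x0 l.
  by have [lp _ l0 l1 _] := lL; have [_ L0 L1] := hL; split; rewrite ?l0 ?l1.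
apply: (@homotopic_trans _ _ _ (cat (cat (cat (rev a1) a2) l) (cat (rev a2) a1))).
  apply: homotopic_concatl (path_from_to_concat hg hl) (path_from_to_rev hg) _.
  apply: homotopic_trans (homotopic_rev_concat hA1 ha2) _.
  exact: homotopic_concatl hA2 (path_from_to_rev hA1) (homotopic_revK ha1).
apply: (@homotopic_trans _ _ _ (cat (cat (rev a1) (cat m a2)) (cat (rev a2) a1))).
  apply: homotopic_concatr (path_from_to_concat hg hl) hA2a1 _.
  apply: homotopic_trans (homotopic_concatl hg hl lL) _.
  apply: homotopic_trans (homotopic_cancel_mid hA1 ha2 hma2).
  exact: homotopic_concatl hg hL (homotopic_concatA hA2 hm ha2).
apply: homotopic_trans (homotopic_concatA hA1 hma2 hA2a1) _.
apply: homotopic_trans (homotopic_sym (homotopic_concatA hA1 hm ha1)).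
exact: homotopic_concatl hA1 (path_from_to_concat hma2 hA2a1) (homotopic_cancel_mid hm ha2 ha1).
Qed.

End Conjugation.

Section WedgeMaps.
Variable R : realType.
Local Notation P := (R * R)%type.
Local Notation E := (@hawaiian_earring R).
Local Notation O := (origin R).
Local Notation cat := (@path_concat R).
Local Notation rev := (@path_rev R).

Definition based_earring_map (X : set P) (x : P) (f : P -> P) :=
  [/\ {within E, continuous f}, f @` E `<=` X & f O = x].

Definition hawaiian_image (X : set P) (x0 : P) (psi : (R -> P) -> R -> P) : set (R -> P) :=
  fun l => is_loop X x0 l /\
    exists g, is_loop E O g /\ path_homotopic X (psi g) l.

Lemma path_from_to_map (Y X : set P) (F : P -> P) a b g :
  {within Y, continuous F} -> F @` Y `<=` X ->
  is_path_from_to Y a b g -> is_path_from_to X (F a) (F b) (F \o g).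
Proof.
move=> cF FY [[cg ig] g0 g1]; split; rewrite /= ?g0 ?g1 //; split.
  by apply: (continuous_within_comp cg cF) => s Is; apply: ig; exists s.
by move=> _ [s Is <-]; apply: FY; exists (g s) => //; apply: ig; exists s.
Qed.

Lemma path_concat_comp (F : P -> P) g g' : F \o cat g g' = cat (F \o g) (F \o g').
Proof. by apply: funext => s; rewrite /= /path_concat; case: ifP. Qed.

Lemma based_earring_map_loop X x F g : based_earring_map X x F ->
  is_loop E O g -> is_path_from_to X x x (F \o g).
Proof. by move=> [cF FX Fx] hg; rewrite -Fx; exact: path_from_to_map hg. Qed.

Lemma based_earring_map_in X x f : based_earring_map X x f -> X x.
Proof. by move=> [_ fX <-]; apply: fX; exists O => //; exact: earring_origin. Qed.

Lemma based_earring_map_fold X x f1 f2 :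
  based_earring_map X x f1 -> based_earring_map X x f2 ->
  based_earring_map X x (earring_fold x f1 f2).
Proof.
move=> f1m f2m; have Xx := based_earring_map_in f1m.
case: f1m f2m => [c1 f1X f1x] [c2 f2X f2x]; split.
- exact: continuous_earring_fold.
- by move=> _ [z Ez <-]; exact: earring_fold_in.
- exact: earring_fold_origin.
Qed.

Lemma based_odd_embed : based_earring_map E O (@odd_embed R).
Proof.
split; [exact: continuous_odd_embed| |exact: odd_embed_origin].
by move=> _ [z Ez <-]; exact: odd_embed_in.
Qed.

Lemma based_even_embed : based_earring_map E O (@even_embed R).
Proof.
split; [exact: continuous_even_embed| |exact: even_embed_origin].
by move=> _ [z Ez <-]; exact: even_embed_in.
Qed.

Lemma wedge_map_HE_hom X x x0 F a : based_earring_map X x F ->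
  is_path_from_to X x x0 a -> HE_hom X x0 (wedge_map F a).
Proof.
move=> Fm ha; have loopF g := @based_earring_map_loop _ _ _ g Fm.
split.
- move=> g hg; have hA := path_from_to_rev ha.
  exact: path_from_to_concat (path_from_to_concat hA (loopF g hg)) ha.
- move=> g g' gg' hg; apply: homotopic_conj ha (loopF g hg) _.
  by case: Fm => cF FX _; apply: homotopic_map cF _ gg' => y Ey; apply: FX; exists y.
- move=> g g' hg hg'; rewrite /wedge_map path_concat_comp.
  exact: homotopic_conj_concat ha (loopF g hg) (loopF g' hg').
Qed.

Lemma loop_in_earring g s : is_loop E O g -> unitI s -> E (g s).
Proof. by move=> [[_ gE] _ _] Is; apply: gE; exists s. Qed.

Lemma homotopic_wedge_map_factor X x x0 F e f a g :
  based_earring_map X x F -> based_earring_map E O e ->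
  (forall z, E z -> F (e z) = f z) -> is_path_from_to X x x0 a ->
  is_loop E O g -> path_homotopic X (wedge_map F a (e \o g)) (wedge_map f a g).
Proof.
move=> Fm em Fef ha hg.
have hFeg := based_earring_map_loop Fm (based_earring_map_loop em hg).
apply: (homotopic_conj ha hFeg); apply: homotopic_eq; first exact: path_from_to_path hFeg.
by move=> s Is /=; apply: Fef; exact: loop_in_earring Is.
Qed.

Lemma wedge_image_factor X x x0 F e f a psi H :
  based_earring_map X x F -> based_earring_map E O e ->
  (forall z, E z -> F (e z) = f z) -> is_path_from_to X x x0 a ->
  is_image_of X x0 psi H ->
  (forall g, is_loop E O g -> path_homotopic X (psi g) (wedge_map f a g)) ->
  H `<=` hawaiian_image X x0 (wedge_map F a).
Proof.
move=> Fm em Fef ha imH psiE l /imH[hl [g [hg psil]]]; split => //.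
exists (e \o g); split; first exact: based_earring_map_loop em hg.
apply: homotopic_trans (homotopic_wedge_map_factor Fm em Fef ha hg) _.
exact: homotopic_trans (homotopic_sym (psiE g hg)) psil.
Qed.

Lemma wedge_image_conj_factor X x x0 F e f a1 a2 psi H :
  based_earring_map X x F -> based_earring_map E O e ->
  based_earring_map X x f -> (forall z, E z -> F (e z) = f z) ->
  is_path_from_to X x x0 a1 -> is_path_from_to X x x0 a2 ->
  is_image_of X x0 psi H ->
  (forall g, is_loop E O g -> path_homotopic X (psi g) (wedge_map f a2 g)) ->
  forall l, H l -> hawaiian_image X x0 (wedge_map F a1)
                     (cat (cat (cat (rev a1) a2) l) (rev (cat (rev a1) a2))).
Proof.
move=> Fm em fm Fef ha1 ha2 imH psiE l /imH[hl [g [hg psil]]].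
have hb := path_from_to_concat (path_from_to_rev ha1) ha2.
split; first exact: path_from_to_concat (path_from_to_concat hb hl) (path_from_to_rev hb).
exists (e \o g); split; first exact: based_earring_map_loop em hg.
apply: homotopic_trans (homotopic_wedge_map_factor Fm em Fef ha1 hg) _.
apply: homotopic_sym; apply: homotopic_conj_change_path ha1 ha2 _ _.
  exact: based_earring_map_loop fm hg.
exact: homotopic_trans (homotopic_sym psil) (psiE g hg).
Qed.

Lemma countable_classesS X (H H' : set (R -> P)) :
  H' `<=` H -> countable_classes X H -> countable_classes X H'.
Proof. by move=> H'H [c hc]; exists c => l l' /H'H hl /H'H hl'; exact: hc. Qed.

Lemma pseudo_HE_subgroup_hawaiian_image X x x0 F a H :
  based_earring_map X x F -> is_path_from_to X x x0 a ->
  H `<=` hawaiian_image X x0 (wedge_map F a) -> ~ countable_classes X H ->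
  pseudo_HE_subgroup X x0 (hawaiian_image X x0 (wedge_map F a)).
Proof.
move=> Fm ha HF Hunc; split; last by move/(countable_classesS HF).
by exists (wedge_map F a); split => //; exact: wedge_map_HE_hom Fm ha.
Qed.

End WedgeMaps.

Theorem mainTheorem14 (R : realType) (X : set (R * R)) (x0 x : R * R)
    (H1 H2 : set (R -> R * R)) :
  planar_peano_continuum X -> X x0 -> X x ->
  pseudo_HE_subgroup X x0 H1 -> pseudo_HE_subgroup X x0 H2 ->
  wedge_point X x0 H1 x -> wedge_point X x0 H2 x ->
  HE_equiv X x0 H1 H2.
Proof.
move=> _ _ _ [_ H1_uncountable] _ [f1 [a1 [c1 f1X f1x ha1 [psi1 [_ im1 psi1E]]]]]
  [f2 [a2 [c2 f2X f2x ha2 [psi2 [_ im2 psi2E]]]]].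
have f1m : based_earring_map X x f1 by [].
have f2m : based_earring_map X x f2 by [].
have Fm := based_earring_map_fold f1m f2m.
have H1_sub := wedge_image_factor Fm (@based_odd_embed R)
  (fun z => earring_fold_odd_embed f2 f1x) ha1 im1 psi1E.
exists (path_concat (path_rev a1) a2), (hawaiian_image X x0 (wedge_map (earring_fold x f1 f2) a1)).
split => //.
- exact: path_from_to_concat (path_from_to_rev ha1) ha2.
- exact: pseudo_HE_subgroup_hawaiian_image Fm ha1 H1_sub H1_uncountable.
- exact: wedge_image_conj_factor Fm (@based_even_embed R) f2m
    (fun z => earring_fold_even_embed f1 f2x) ha1 ha2 im2 psi2E.
Qed.
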